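(* Let $p\in\mathbb{F}_2[x_1,\dots,x_n]$ be a uniformly chosen polynomial of degree $3$. Then the probability that there exists an affine subspace $A\subset\mathbb{F}_2^n$ of co-dimension at most $t=n-n^{3/4}$ such that $p$ restricted to $A$ has degree at most $2$ is at most $2^{-\Omega(n^2)}$.
   Context: Polynomials are taken as Boolean functions in algebraic normal form (sums of multilinear monomials). The restriction of $p$ to an affine subspace $A$ given by independent affine equations $\ell_1,\dots,\ell_{t'}$ is obtained by successively using each $\ell_j$ to eliminate one variable (substituting it by an affine expression in the others) and reducing to algebraic normal form; its degree does not depend on which variables are eliminated. *)

From mathcomp Require Import all_boot all_algebra.
Set Implicit Arguments. Unset Strict Implicit. Unset Printing Implicit Defensive.
Import GRing.Theory.
Local Open Scope ring_scope.

(* A Boolean polynomial in ANF over F_2 in variables x_0..x_{n-1} is its set of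
   monomials (a monomial = the set of variables it contains). *)
Definition anf (n : nat) := {set {set 'I_n}}.

Definition anf_eval (n : nat) (P : anf n) (x : 'rV['F_2]_n) : 'F_2 :=
  \sum_(S in P) \prod_(i in S) x 0 i.

Definition anf_deg_le (n : nat) (P : anf n) (d : nat) : bool :=
  [forall S in P, #|S| <= d]%N.

Definition fun_deg_le (m : nat) (f : 'rV['F_2]_m -> 'F_2) (d : nat) : bool :=
  [exists Q : anf m, anf_deg_le Q d && [forall y, f y == anf_eval Q y]].

(* polynomials of degree at most 3 in n variables (uniform sample space) *)
Definition polys3 (n : nat) : {set anf n} := [set P | anf_deg_le P 3].

(* P restricted to some affine subspace A of dimension m (codimension n - m)
   has degree <= d.  A = { y *m M + b | y in F_2^m } with M of full row rank m;
   the restriction is P composed with this affine parametrization. *)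
Definition restr_deg_le (n m : nat) (P : anf n) (d : nat) : bool :=
  [exists M : 'M['F_2]_(m, n), [exists b : 'rV['F_2]_n,
     row_free M && fun_deg_le (fun y => anf_eval P (y *m M + b)) d]].

(* bad event: some affine subspace of codimension at most n - n^(3/4)
   (i.e. dimension m with m >= n^(3/4), i.e. m^4 >= n^3) on which P has degree <= 2 *)
Definition bad3 (n : nat) : {set anf n} :=
  [set P in polys3 n | [exists m : 'I_n.+1,
       (n ^ 3 <= m ^ 4)%N && restr_deg_le m P 2]].

(* Fix an affine parametrization y |-> y M + b, with M of full row rank m, of an
   m-dimensional affine subspace.  By Moebius inversion, the coefficient of the
   monomial y_S (|S| = 3) in the restriction of p is the sum of p over the
   subcube {y M + b : supp y \subset S}.  These C(m,3) coefficients depend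
   F_2-linearly on p, and every vector of them is attained by a cubic p (compose
   the desired cubic in y with a left inverse of M), so they all vanish -- as they
   must when the restriction has degree <= 2 -- for exactly a 2^-C(m,3) fraction
   of cubics.  A union bound over the 2^(mn+n) pairs (M, b) and the n + 1 values
   of m loses 2^(mn+2n), while C(m,3) is of order m^3 >= n^(9/4) when
   m^4 >= n^3, which exceeds mn + 2n + n^2 for large n. *)

From HB Require Import structures.
From mathcomp Require Import all_boot all_algebra.
From mathcomp Require Import zify.
Set Implicit Arguments. Unset Strict Implicit. Unset Printing Implicit Defensive.
Import GRing.Theory.
Local Open Scope ring_scope.

Lemma F2_addrr (x : 'F_2) : x + x = 0.
Proof. exact: addrr_pchar2 (pchar_Fp (isT : prime 2)) x. Qed.

Lemma F2_cases (x : 'F_2) : x = 0 \/ x = 1.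
Proof. by case: x => -[|[|//]] Hx; [left | right]; apply: val_inj. Qed.

Lemma F2_mulrr (x : 'F_2) : x * x = x.
Proof. by case: (F2_cases x) => ->; rewrite ?mul0r ?mul1r. Qed.

Section ANF.
Variable n : nat.
Implicit Types (P Q : anf n) (f g : 'rV['F_2]_n -> 'F_2) (x : 'rV['F_2]_n).

Definition anf_add P Q : anf n := [set S | (S \in P) != (S \in Q)].

Lemma anf_eval_add P Q x : anf_eval (anf_add P Q) x = anf_eval P x + anf_eval Q x.
Proof.
rewrite /anf_eval !(big_mkcond (fun S => S \in _)) -big_split /=.
apply: eq_bigr => S _.
rewrite inE; case: (S \in P); case: (S \in Q); rewrite ?addr0 ?add0r //.
by rewrite F2_addrr.
Qed.

Lemma anf_deg_le_add P Q d :
  anf_deg_le P d -> anf_deg_le Q d -> anf_deg_le (anf_add P Q) d.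
Proof.
move=> /forall_inP degP /forall_inP degQ; apply/forall_inP => S.
rewrite inE; case SP: (S \in P) => SPQ; first exact: degP.
by apply: degQ; case: (S \in Q) SPQ.
Qed.

Lemma anf_addIl Q : injective (anf_add^~ Q).
Proof.
move=> P1 P2 /setP eqP12; apply/setP => S; have := eqP12 S; rewrite !inE.
by case: (S \in P1); case: (S \in P2); case: (S \in Q).
Qed.

Lemma fun_deg_leP f d :
  reflect (exists2 P, anf_deg_le P d & f =1 anf_eval P) (fun_deg_le f d).
Proof.
apply: (iffP existsP) => [[P /andP[degP /forallP eqf]] | [P degP eqf]].
  by exists P => // x; apply/eqP.
by exists P; rewrite degP; apply/forallP => x; rewrite eqf.
Qed.

Lemma eq_fun_deg_le f g d : f =1 g -> fun_deg_le f d = fun_deg_le g d.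
Proof. by move=> eqfg; apply: eq_existsb => P; under eq_forallb => x do rewrite eqfg. Qed.

Lemma fun_deg_le_mon (S : {set 'I_n}) :
  fun_deg_le (fun x => \prod_(i in S) x 0 i) #|S|.
Proof.
apply/fun_deg_leP; exists [set S]; first by apply/forall_inP => T /set1P ->.
by move=> x; rewrite /anf_eval big_set1.
Qed.

Lemma fun_deg_le0 d : fun_deg_le (fun _ : 'rV_n => 0) d.
Proof.
apply/fun_deg_leP; exists set0; first by apply/forall_inP => S; rewrite inE.
by move=> x; rewrite /anf_eval big_set0.
Qed.

Lemma fun_deg_leD f g d :
  fun_deg_le f d -> fun_deg_le g d -> fun_deg_le (fun x => f x + g x) d.
Proof.
move=> /fun_deg_leP[P degP eqf] /fun_deg_leP[Q degQ eqg].
apply/fun_deg_leP; exists (anf_add P Q); first exact: anf_deg_le_add.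
by move=> x; rewrite anf_eval_add eqf eqg.
Qed.

Lemma fun_deg_le_sum (I : Type) (r : seq I) (p : pred I) (F : I -> 'rV['F_2]_n -> 'F_2) d :
  (forall i, p i -> fun_deg_le (F i) d) ->
  fun_deg_le (fun x => \sum_(i <- r | p i) F i x) d.
Proof.
move=> degF; elim: r => [|i r IHr].
  by under eq_fun_deg_le => x do rewrite big_nil; apply: fun_deg_le0.
under eq_fun_deg_le => x do rewrite big_cons.
by case pi: (p i) => //; apply: fun_deg_leD IHr; apply: degF.
Qed.

Lemma fun_deg_leZ (c : 'F_2) f d : fun_deg_le f d -> fun_deg_le (fun x => c * f x) d.
Proof.
case: (F2_cases c) => -> degf.
  by under eq_fun_deg_le => x do rewrite mul0r; apply: fun_deg_le0.
by under eq_fun_deg_le => x do rewrite mul1r.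
Qed.

Lemma fun_deg_leW f (d e : nat) : (d <= e)%N -> fun_deg_le f d -> fun_deg_le f e.
Proof.
move=> le_de /fun_deg_leP[P /forall_inP degP eqf]; apply/fun_deg_leP.
by exists P => //; apply/forall_inP => S /degP /leq_trans; apply.
Qed.

Lemma fun_deg_le_mulx (i : 'I_n) f d :
  fun_deg_le f d -> fun_deg_le (fun x => x 0 i * f x) d.+1.
Proof.
move=> /fun_deg_leP[P /forall_inP degP eqf].
rewrite (eq_fun_deg_le _ (g := fun x => \sum_(S in P) \prod_(j in i |: S) x 0 j)).
  apply: fun_deg_le_sum => S /degP degS.
  apply: fun_deg_leW (fun_deg_le_mon _).
  by rewrite cardsU1 -add1n leq_add ?leq_b1.
move=> x; rewrite eqf /anf_eval mulr_sumr; apply: eq_bigr => S _.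
have [iS | iNS] := boolP (i \in S); last by rewrite big_setU1.
by rewrite (setUidPr _) ?sub1set // (bigD1 i) //= mulrA F2_mulrr.
Qed.

End ANF.

Section AffineComposition.
Variables n m : nat.
Variables (N : 'M['F_2]_(n, m)) (c : 'rV['F_2]_m).

Lemma fun_deg_le_mul_affine (k : 'I_m) (f : 'rV['F_2]_n -> 'F_2) d :
  fun_deg_le f d -> fun_deg_le (fun x => (x *m N + c) 0 k * f x) d.+1.
Proof.
move=> degf.
rewrite (eq_fun_deg_le _ (g := fun x => \sum_i N i k * (x 0 i * f x) + c 0 k * f x)).
  apply: fun_deg_leD; last exact/fun_deg_leZ/(fun_deg_leW (leqnSn d)).
  by apply: fun_deg_le_sum => i _; apply/fun_deg_leZ/fun_deg_le_mulx.
move=> x; rewrite !mxE mulrDl mulr_suml; congr (_ + _); apply: eq_bigr => i _.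
by rewrite mulrA (mulrC (N i k)).
Qed.

Lemma fun_deg_le_prod_affine (r : seq 'I_m) :
  fun_deg_le (fun x => \prod_(k <- r) (x *m N + c) 0 k) (size r).
Proof.
elim: r => [|k r IHr]; last first.
  by under eq_fun_deg_le => x do rewrite big_cons; apply: fun_deg_le_mul_affine.
rewrite (eq_fun_deg_le _ (g := fun x => \prod_(i in set0) x 0 i)).
  by have := fun_deg_le_mon (set0 : {set 'I_n}); rewrite cards0.
by move=> x; rewrite big_nil big_set0.
Qed.

Lemma fun_deg_le_comp_affine (Q : anf m) d :
  anf_deg_le Q d -> fun_deg_le (fun x => anf_eval Q (x *m N + c)) d.
Proof.
move=> /forall_inP degQ; apply: fun_deg_le_sum => S /degQ degS.
under eq_fun_deg_le => x do rewrite -big_enum.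
by apply: fun_deg_leW (fun_deg_le_prod_affine _); rewrite -cardE.
Qed.

End AffineComposition.

Lemma card_subset_interval (T : finType) (A B : {set T}) :
  A \subset B -> #|[set z : {set T} | A \subset z & z \subset B]| = (2 ^ #|B :\: A|)%N.
Proof.
move=> AB; rewrite -card_powerset.
have -> : [set z : {set T} | A \subset z & z \subset B] = setU A @: powerset (B :\: A).
  apply/setP => z; rewrite inE; apply/andP/imsetP => [[Az zB] | [w]].
    exists (z :\: A); first by rewrite powersetE setSD.
    apply/setP => x; rewrite !inE.
    by case: (boolP (x \in A)) => // /(subsetP Az) ->.
  rewrite powersetE => wBA ->; split; first exact: subsetUl.
  by rewrite subUset AB (subset_trans wBA) ?subsetDl.
apply: card_in_imset => w1 w2; rewrite !powersetE !subsetD => /andP[_ w1A] /andP[_ w2A].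
move=> /(congr1 (fun w => w :\: A)); rewrite !setDUl setDv !set0U.
by rewrite (setDidPl w1A) (setDidPl w2A).
Qed.

Lemma odd_card_subset_interval (T : finType) (A B : {set T}) :
  odd #|[set z : {set T} | A \subset z & z \subset B]| = (A == B).
Proof.
have [AB | ABN] := boolP (A \subset B).
  by rewrite card_subset_interval // oddX orbF cards_eq0 setD_eq0 eqEsubset AB.
rewrite (_ : [set z | _] = set0) ?cards0; last first.
  by apply/setP => z; rewrite !inE; apply: contraNF ABN => /andP[/subset_trans]; apply.
by apply/esym; apply: contraNF ABN => /eqP ->.
Qed.

Definition char_row m (z : {set 'I_m}) : 'rV['F_2]_m := \row_i (i \in z)%:R.

Lemma prod_char_row m (T z : {set 'I_m}) :
  \prod_(i in T) char_row z 0 i = (T \subset z)%:R.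
Proof.
have [Tz | /subsetPn[i iT iNz]] := boolP (T \subset z).
  by apply: big1 => i iT; rewrite mxE (subsetP Tz i iT).
by rewrite (bigD1 i) //= mxE (negbTE iNz) mul0r.
Qed.

Definition cube_sum m (g : 'rV['F_2]_m -> 'F_2) (S : {set 'I_m}) : 'F_2 :=
  \sum_(z : {set 'I_m} | z \subset S) g (char_row z).

Lemma eq_cube_sum m (f g : 'rV['F_2]_m -> 'F_2) S :
  f =1 g -> cube_sum f S = cube_sum g S.
Proof. by move=> eq_fg; apply: eq_bigr => z _; apply: eq_fg. Qed.

Lemma cube_sum_anf m (Q : anf m) (S : {set 'I_m}) :
  cube_sum (anf_eval Q) S = (S \in Q)%:R.
Proof.
have cube_sum_mon (T : {set 'I_m}) :
  \sum_(z : {set 'I_m} | z \subset S) \prod_(i in T) char_row z 0 i = (T == S)%:R.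
  under eq_bigr => z _ do rewrite prod_char_row.
  rewrite -natr_sum -Fp_nat_mod // modn2 -odd_card_subset_interval -big_mkcondr.
  by under eq_bigl => z do rewrite andbC; rewrite sum1dep_card.
rewrite /cube_sum /anf_eval exchange_big /=.
under eq_bigr => T _ do rewrite cube_sum_mon.
have [SQ | SNQ] := boolP (S \in Q).
  by rewrite (bigD1 S) //= eqxx big1 ?addr0 // => T /andP[_ /negbTE ->].
by apply: big1 => T TQ; case: eqP => // TS; move: SNQ; rewrite -TS TQ.
Qed.

(* The library equips {ffun aT -> V} with finType and zmodType structures but not
   with their join. *)
HB.instance Definition _ (aT : finType) (V : finZmodType) :=
  GRing.Zmodule.on {ffun aT -> V}.

Lemma card_kernel_mul_le (T : finType) (V : finZmodType) (D : {set T})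
    (add : T -> T -> T) (f : T -> V) :
  {in D &, forall x y, add x y \in D} -> (forall y, injective (add^~ y)) ->
  {morph f : x y / add x y >-> x + y} -> (forall v, exists2 x, x \in D & f x = v) ->
  (#|[set x in D | f x == 0%R]| * #|V| <= #|D|)%N.
Proof.
move=> addD addI fD fsurj.
have kernel_le_fiber v : (#|[set x in D | f x == 0%R]| <= #|[set x in D | f x == v]|)%N.
  have [s sD <-] := fsurj v; rewrite -(card_imset _ (addI s)).
  apply/subset_leq_card/subsetP => _ /imsetP[x /setIdP[xD /eqP fx0] ->].
  by rewrite inE addD // fD fx0 add0r eqxx.
have -> : #|D| = (\sum_v #|[set x in D | f x == v]|)%N.
  rewrite -sum1_card (partition_big f predT) //=; apply: eq_bigr => v _.
  by rewrite -sum1_card; apply: eq_bigl => x; rewrite inE.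
by rewrite mulnC -sum_nat_const; apply: leq_sum => v _.
Qed.

Definition triple m := {S : {set 'I_m} | #|S| == 3%N}.

Lemma card_triple m : #|{: triple m}| = 'C(m, 3).
Proof.
rewrite card_sig -[m in 'C(m, 3)]card_ord -card_draws.
by apply: eq_card => S; rewrite !inE.
Qed.

Section RestrictionCubicCoefficients.
Variables n m : nat.
Variables (M : 'M['F_2]_(m, n)) (b : 'rV['F_2]_n).

Definition restr_cubic_coeffs (P : anf n) : {ffun triple m -> 'F_2} :=
  [ffun S => cube_sum (fun y => anf_eval P (y *m M + b)) (val S)].

Lemma restr_cubic_coeffs_add (P Q : anf n) :
  restr_cubic_coeffs (anf_add P Q) = restr_cubic_coeffs P + restr_cubic_coeffs Q.
Proof.
apply/ffunP => S; rewrite !ffunE -big_split; apply: eq_bigr => z _.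
exact: anf_eval_add.
Qed.

Lemma restr_cubic_coeffs_deg2 (P : anf n) :
  fun_deg_le (fun y => anf_eval P (y *m M + b)) 2 -> restr_cubic_coeffs P = 0.
Proof.
move=> /fun_deg_leP[Q /forall_inP degQ eqPQ]; apply/ffunP => S; rewrite !ffunE.
rewrite (eq_cube_sum _ eqPQ) cube_sum_anf.
by case: (boolP (val S \in Q)) => // /degQ; rewrite (eqP (valP S)).
Qed.

Lemma restr_cubic_coeffs_surj (c : {ffun triple m -> 'F_2}) :
  row_free M -> exists2 P, P \in polys3 n & restr_cubic_coeffs P = c.
Proof.
case/row_freeP => N MN.
pose Q : anf m := val @: [set S | c S == 1].
have degQ : anf_deg_le Q 3 by apply/forall_inP => _ /imsetP[S _ ->]; rewrite (eqP (valP S)).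
have /fun_deg_leP[P degP eqPQ] := fun_deg_le_comp_affine N (- (b *m N)) degQ.
exists P; first by rewrite inE.
apply/ffunP => S; rewrite !ffunE.
rewrite (eq_cube_sum _ (g := anf_eval Q)) => [|y]; last first.
  by rewrite -eqPQ mulmxDl addrK -mulmxA MN mulmx1.
rewrite cube_sum_anf (mem_imset _ _ val_inj) inE.
by case: (F2_cases (c S)) => ->.
Qed.

End RestrictionCubicCoefficients.

Local Close Scope ring_scope.

Lemma leq_card_bigcup (I T : finType) (P : pred I) (B : I -> {set T}) :
  #|\bigcup_(i | P i) B i| <= \sum_(i | P i) #|B i|.
Proof.
elim/big_rec2: _ => [|i k U _ IH]; first by rewrite cards0.
exact: leq_trans (leq_card_setU _ _) (leq_add _ IH).
Qed.

Lemma card_le_of_cover (I T : finType) (P : pred I) (A : {set T}) (B : I -> {set T}) c k :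
  A \subset \bigcup_(i | P i) B i -> (forall i, P i -> #|B i| * c <= k) ->
  #|A| * c <= #|[set i | P i]| * k.
Proof.
move=> A_sub B_le; apply: leq_trans (leq_mul (subset_leq_card A_sub) (leqnn c)) _.
apply: leq_trans (leq_mul (leq_card_bigcup _ _) (leqnn c)) _.
by rewrite big_distrl -sum_nat_cond_const; apply: leq_sum.
Qed.

Lemma card_restr_deg2_le n m :
  #|[set P in polys3 n | restr_deg_le m P 2]| * 2 ^ 'C(m, 3)
    <= 2 ^ (m * n + n) * #|polys3 n|.
Proof.
pose kernel (p : 'M['F_2]_(m, n) * 'rV['F_2]_n) :=
  [set P in polys3 n | restr_cubic_coeffs p.1 p.2 P == 0%R].
have restr_sub : [set P in polys3 n | restr_deg_le m P 2]
    \subset \bigcup_(p | row_free p.1) kernel p.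
  apply/subsetP => P; rewrite inE => /andP[P3 /existsP[M /existsP[b /andP[freeM degMb]]]].
  by apply/bigcupP; exists (M, b) => //; rewrite inE P3 restr_cubic_coeffs_deg2 ?eqxx.
have kernel_le p : row_free p.1 -> #|kernel p| * 2 ^ 'C(m, 3) <= #|polys3 n|.
  move=> freeM; rewrite -card_triple -[X in X ^ _](card_Fp (isT : prime 2)) -card_ffun.
  apply: card_kernel_mul_le.
  - by move=> P Q; rewrite !inE; apply: anf_deg_le_add.
  - exact: anf_addIl.
  - exact: restr_cubic_coeffs_add.
  - by move=> c; apply: restr_cubic_coeffs_surj.
apply: leq_trans (card_le_of_cover restr_sub kernel_le) _.
rewrite leq_mul2r; apply/orP; right; apply: leq_trans (max_card _) _.
by rewrite card_prod !card_mx card_Fp // mul1n expnD.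
Qed.

Lemma cube_le_of_fourth_power n m : 40 ^ 4 <= n -> n ^ 3 <= m ^ 4 -> 40 * n ^ 2 <= m ^ 3.
Proof.
move=> n_large nm; rewrite -(@leq_exp2r _ _ 4) // expnMn -!expnM.
apply: (@leq_trans (n * n ^ 8)); first by rewrite leq_mul2r n_large orbT.
by rewrite -expnS (expnM n 3 3) (mulnC 3 4) (expnM m 4 3) leq_exp2r.
Qed.

Lemma binom3_mul6 k : 'C(k.+3, 3) * 6 = k.+3 * k.+2 * k.+1.
Proof. by rewrite (_ : 6 = 3`!) // bin_ffact !ffactnS ffactn0 muln1 mulnA. Qed.

Lemma binom3_ge n m : 40 * n ^ 2 <= m ^ 3 -> m <= n ->
  m * n + n + (n + n ^ 2) <= 'C(m, 3).
Proof.
case: m => [|[|[|k]]] m3 mn; try by rewrite (_ : n = 0) //; nia.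
have sq : k.+3 * k.+3 <= n * n by apply: leq_mul.
have mn2 : k.+3 * n <= n * n by apply: leq_mul.
have n12 : 12 * n <= n * n by apply: leq_mul => //; nia.
by rewrite -(leq_pmul2r (isT : 0 < 6)) binom3_mul6; lia.
Qed.

Lemma card_bad3_le n : 40 ^ 4 <= n -> #|bad3 n| * 2 ^ (n ^ 2) <= #|polys3 n|.
Proof.
move=> n_large.
pose B (m : 'I_n.+1) := [set P in polys3 n | restr_deg_le m P 2].
have bad_sub : bad3 n \subset \bigcup_(m : 'I_n.+1 | n ^ 3 <= m ^ 4) B m.
  apply/subsetP => P; rewrite inE => /andP[P3 /existsP[m /andP[nm degP]]].
  by apply/bigcupP; exists m => //; rewrite inE P3.
have B_le (m : 'I_n.+1) : n ^ 3 <= m ^ 4 -> #|B m| * 2 ^ (n + n ^ 2) <= #|polys3 n|.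
  move=> nm; rewrite -(@leq_pmul2l (2 ^ (m * n + n))) ?expn_gt0 //.
  apply: leq_trans (card_restr_deg2_le n m).
  rewrite mulnCA -expnD leq_mul2l leq_exp2l //; apply/orP; right.
  by apply: binom3_ge; [exact: cube_le_of_fourth_power | rewrite -ltnS].
have := leq_trans (card_le_of_cover bad_sub B_le) (leq_mul (max_card _) (leqnn _)).
rewrite card_ord expnD mulnCA => /leq_trans/(_ (leq_mul (ltn_expl n (isT : 1 < 2)) (leqnn _))).
by rewrite leq_pmul2l ?expn_gt0.
Qed.

(* Imported last: Reals rebinds the delimiter %N used above for nat_scope. *)
From Stdlib Require Import Reals Lra.

Lemma INR_expn (b k : nat) : INR (expn b k) = (INR b ^ k)%R.
Proof. by elim: k => [|k IHk] //; rewrite expnS mulnE mult_INR IHk. Qed.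

Theorem mainTheorem10 :
  exists c : R, (0 < c)%R /\
  exists N : nat, forall n : nat, (N <= n)%N ->
    (INR #|bad3 n| <= Rpower 2 (- c * (INR n ^ 2)) * INR #|polys3 n|)%R.
Proof.
exists 1%R; split; first lra.
exists (40 ^ 4)%nat => n n_large.
have pow2_pos : (0 < 2 ^ expn n 2)%R by apply: pow_lt; lra.
have -> : (- (1) * INR n ^ 2 = - INR (expn n 2))%R by rewrite INR_expn; ring.
rewrite Rpower_Ropp Rpower_pow; last lra.
apply: (Rmult_le_reg_r _ _ _ pow2_pos).
rewrite (Rmult_comm (/ _)) Rmult_assoc Rinv_l ?Rmult_1_r; last lra.
move: (card_bad3_le n_large) => /leP/le_INR.
by rewrite mulnE mult_INR !INR_expn (_ : INR 2 = 2%R) //=; lra.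
Qed.
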